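(* Let $m,n\geq 2$, let $P_m+P_n$ be the join of the paths $P_m$ and $P_n$, and let $g:V(G_1)\to V(G_2)$ be any function between two disjoint copies $G_1,G_2$ of $P_m+P_n$ whose image has size $s$ with $1<s<m+n$. Then $1\leq Dist(F_{P_m+P_n})\leq 3$.
   Context: $P_k$ denotes the path on $k$ vertices. The join $G+G^*$ of graphs with disjoint vertex sets has vertex set $V(G)\cup V(G^* )$ and edge set $E(G)\cup E(G^* )\cup\{uv: u\in V(G), v\in V(G^* )\}$. $Dist(H)$ is the least $t$ such that $H$ has a labeling $V(H)\to\{1,\dots,t\}$ preserved by no non-identity automorphism of $H$. Functigraph: for disjoint copies $G_1,G_2$ of $G$ and a function $g:V(G_1)\to V(G_2)$, $F_G$ has vertex set $V(G_1)\cup V(G_2)$ and edge set $E(G_1)\cup E(G_2)\cup\{uv: u\in V(G_1),\ g(u)=v\}$. *)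

From mathcomp Require Import all_boot all_order all_fingroup.
Set Implicit Arguments. Unset Strict Implicit. Unset Printing Implicit Defensive.

Definition path_graph (k : nat) : rel 'I_k :=
  fun i j => (i.+1 == j :> nat) || (j.+1 == i :> nat).

Arguments path_graph k : clear implicits.

Definition graph_join (A B : finType) (eA : rel A) (eB : rel B) : rel (A + B) :=
  fun x y => match x, y with
             | inl a, inl a' => eA a a'
             | inr b, inr b' => eB b b'
             | _, _ => true
             end.

Definition functigraph (V : finType) (e : rel V) (g : V -> V) : rel (V + V) :=
  fun x y => match x, y with
             | inl u, inl u' => e u u'
             | inr v, inr v' => e v v'
             | inl u, inr v => g u == v
             | inr v, inl u => g u == v
             end.

Definition is_automorphism (T : finType) (e : rel T) (s : {perm T}) : bool :=
  [forall x, forall y, e (s x) (s y) == e x y].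

Definition distinguishing_labeling (T : finType) (e : rel T) (t : nat)
  (f : T -> 'I_t) : bool :=
  [forall s : {perm T}, (is_automorphism e s && [forall x, f (s x) == f x])
                          ==> (s == 1%g)].

Definition has_dist_labeling (T : finType) (e : rel T) (t : nat) : bool :=
  [exists f : {ffun T -> 'I_t}, distinguishing_labeling e f].

Lemma has_dist_labeling_card (T : finType) (e : rel T) :
  has_dist_labeling e #|T|.
Proof.
apply/existsP; exists [ffun x => enum_rank x].
apply/forallP => s; apply/implyP => /andP [_ /forallP H].
apply/eqP/permP => x; rewrite perm1.
by have := H x; rewrite !ffunE => /eqP /enum_rank_inj.
Qed.

Lemma has_dist_labeling_ex (T : finType) (e : rel T) :
  exists t, has_dist_labeling e t.
Proof. by exists #|T|; apply: has_dist_labeling_card. Qed.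

Definition Dist (T : finType) (e : rel T) : nat :=
  ex_minn (has_dist_labeling_ex e).

From mathcomp Require Import all_boot all_order all_fingroup.
From mathcomp Require Import zify.
Set Implicit Arguments. Unset Strict Implicit. Unset Printing Implicit Defensive.

(* Every automorphism s of F_G, G = P_m + P_n, maps each copy of G onto itself.
   A vertex of G_1 has a single neighbour in G_2, so if s keeps x in G_1, at
   most one neighbour of x leaves G_1; in a join of two paths with at least two
   vertices each, this lets at most one vertex leave G_1 as soon as one vertex
   stays, and likewise for G_2. Counting excludes the mixed cases, and an s
   exchanging the two copies would make g onto. So s is a pair (s1, s2) of
   automorphisms of G with g \o s1 = s2 \o g. When m > 2 (or n > 2), the same
   distinguishing 3-labelling of P_m + P_n on both copies suffices. When
   m = n = 2, G = K_4 and the labels follow g: the second copy marks a pair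
   {g u, q} with q outside the image of g, the first a pair {u, v} with
   g u <> g v, so neither pair can be exchanged. *)

Lemma is_automorphismP (T : finType) (e : rel T) (s : {perm T}) :
  reflect {mono s : x y / e x y} (is_automorphism e s).
Proof.
apply: (iffP forallP) => [s_aut x y | s_mono x]; first exact/eqP/(forallP (s_aut x)).
by apply/forallP => y; rewrite s_mono.
Qed.

Lemma distinguishing_labelingP (T : finType) (e : rel T) t (f : T -> 'I_t) :
  reflect (forall s : {perm T}, {mono s : x y / e x y} ->
             (forall x, f (s x) = f x) -> s = 1%g)
          (distinguishing_labeling e f).
Proof.
apply: (iffP forallP) => [f_dist s s_mono s_f | f_dist s].
  apply/eqP; apply: (implyP (f_dist s)).
  by rewrite (introT (is_automorphismP _ _) s_mono); apply/forallP => x; rewrite s_f.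
apply/implyP => /andP [/is_automorphismP s_mono /forallP s_f].
by apply/eqP/f_dist => // x; apply/eqP.
Qed.

Lemma Dist_le (T : finType) (e : rel T) t : has_dist_labeling e t -> Dist e <= t.
Proof. by rewrite /Dist; case: ex_minnP => d _; apply. Qed.

Lemma Dist_gt0 (T : finType) (e : rel T) (x : T) : 0 < Dist e.
Proof. by rewrite /Dist; case: ex_minnP => [[|d]] // /existsP [f _]; case: (f x). Qed.

Lemma path_graph_irrefl k : irreflexive (path_graph k).
Proof. by move=> i; apply/negP; case/orP => /eqP; lia. Qed.

Lemma path_graph_neighbour k : 1 < k -> forall i : 'I_k, exists j, path_graph k j i.
Proof.
move=> k_gt1 i; have i_lt := ltn_ord i.
have [i1_lt | i_last] := ltnP i.+1 k.
  by exists (Ordinal i1_lt); apply/orP; right.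
have i1_lt : i.-1 < k by lia.
by exists (Ordinal i1_lt); apply/orP; left; apply/eqP => /=; lia.
Qed.

Lemma path_graph_aut_fix0 k (h : {perm 'I_k}) :
  {mono h : i j / path_graph k i j} -> (forall i : 'I_k, val i = 0 -> h i = i) -> h = 1%g.
Proof.
move=> h_mono h0.
suff fix_upto t (i : 'I_k) : i <= t -> h i = i.
  by apply/permP => i; rewrite perm1 (fix_upto i).
elim: t i => [|t IH] i le_it; first by apply/h0/eqP; rewrite -leqn0.
have [|lt_ti] := leqP i t; first exact: IH.
have i_lt := ltn_ord i; have t_lt : t < k by lia.
have : path_graph k (h (Ordinal t_lt)) (h i).
  by rewrite h_mono /path_graph /=; apply/orP; left; apply/eqP; lia.
rewrite IH //; case/orP => /eqP /= hi; first by apply: val_inj; rewrite /= -hi; lia.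
have t1_lt : t.-1 < k by lia.
have : h i = h (Ordinal t1_lt) by apply: val_inj; rewrite (IH (Ordinal t1_lt)) /=; lia.
by move/perm_inj/(congr1 val) => /=; lia.
Qed.

Definition sum_swap {A B : Type} (x : A + B) : B + A :=
  match x with inl a => inr a | inr b => inl b end.

Lemma sum_swapK (A B : Type) : cancel (@sum_swap A B) (@sum_swap B A).
Proof. by case. Qed.

Lemma graph_join_swap (A B : finType) (eA : rel A) (eB : rel B) :
  {mono @sum_swap A B : x y / graph_join eA eB x y >-> graph_join eB eA x y}.
Proof. by case=> ? []. Qed.

Definition outer_neighbour_unique (T : Type) (e : rel T) (P : pred T) : Prop :=
  forall x y1 y2, P x -> ~~ P y1 -> ~~ P y2 -> e x y1 -> e x y2 -> y1 = y2.

Lemma outer_neighbour_unique_swap (A B : finType) (eA : rel A) (eB : rel B)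
    (P : pred (A + B)) :
  outer_neighbour_unique (graph_join eA eB) P ->
  outer_neighbour_unique (graph_join eB eA) (P \o @sum_swap B A).
Proof.
move=> uP x y1 y2 Px N1 N2 E1 E2; apply: (can_inj (@sum_swapK B A)).
by apply: uP Px N1 N2 _ _; rewrite graph_join_swap.
Qed.

Lemma join_outside_inl_eq (A B : finType) (eA : rel A) (eB : rel B)
    (P : pred (A + B)) :
  (exists x, P x) -> outer_neighbour_unique (graph_join eA eB) P -> 1 < #|B| ->
  forall a1 a2, ~~ P (inl a1) -> ~~ P (inl a2) -> a1 = a2.
Proof.
move=> P_inhabited uP /card_gt1P [b1 [b2 [_ _ b12]]] a1 a2 N1 N2.
have [/existsP [b Pb] | /existsPn notPB] := boolP [exists b, P (inr b)].
  exact: inl_inj (uP _ _ _ Pb N1 N2 isT isT).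
case: P_inhabited => [[a Pa | b Pb]]; last by move/negP: (notPB b).
by rewrite (inr_inj (uP _ _ _ Pa (notPB b1) (notPB b2) isT isT)) eqxx in b12.
Qed.

Lemma join_outside_le1 (A B : finType) (eA : rel A) (eB : rel B)
    (P : {pred A + B}) :
  1 < #|A| -> 1 < #|B| -> irreflexive eA -> (forall a, exists a', eA a' a) ->
  (exists x, P x) -> outer_neighbour_unique (graph_join eA eB) P ->
  #|[predC P]| <= 1.
Proof.
move=> A_gt1 B_gt1 eA_irr eA_nbr P_inhabited uP.
have left_eq := join_outside_inl_eq P_inhabited uP B_gt1.
have right_eq b1 b2 : ~~ P (inr b1) -> ~~ P (inr b2) -> b1 = b2.
  have [x Px] := P_inhabited.
  have P'_inhabited : exists x, (P \o @sum_swap B A) x.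
    by exists (sum_swap x); rewrite /= sum_swapK.
  exact: join_outside_inl_eq P'_inhabited (outer_neighbour_unique_swap uP) A_gt1 b1 b2.
have no_mixed a b : ~~ P (inl a) -> ~~ P (inr b) -> False.
  move=> Na Nb; have [a' a'a] := eA_nbr a.
  have [Pa' | Na'] := boolP (P (inl a')); first by have := uP _ _ _ Pa' Na Nb a'a isT.
  by move: a'a; rewrite (left_eq _ _ Na' Na) eA_irr.
apply/card_le1_eqP => [[a1|b1] [a2|b2]]; rewrite !inE => N1 N2.
- by rewrite (left_eq _ _ N1 N2).
- by case: (no_mixed _ _ N1 N2).
- by case: (no_mixed _ _ N2 N1).
- by rewrite (right_eq _ _ N1 N2).
Qed.

Lemma card_sum_pred (A B : finType) (P : {pred A + B}) :
  #|P| = #|[pred a | inl a \in P]| + #|[pred b | inr b \in P]|.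
Proof. by rewrite -!sum1_card big_sumType. Qed.

Lemma card_perm_to_inr (A B : finType) (s : {perm A + B}) :
  #|[pred a | ~~ is_inl (s (inl a))]| + #|[pred b | ~~ is_inl (s (inr b))]| = #|B|.
Proof.
have -> : #|B| = #|s @^-1: [set x | ~~ is_inl x]|.
  rewrite card_preimset; last exact: perm_inj.
  rewrite card_sum_pred.
  have -> : #|[pred a | inl a \in [set x : A + B | ~~ is_inl x]]| = 0.
    by apply: eq_card0 => a; rewrite !inE.
  by rewrite add0n; apply: eq_card => b; rewrite !inE.
by rewrite card_sum_pred; congr (_ + _); apply: eq_card => x; rewrite !inE.
Qed.

Lemma predC_card_full (T : finType) (P Q : {pred T}) :
  #|[predC P]| + #|[predC Q]| = #|T| -> (forall x, ~~ P x) -> forall x, Q x.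
Proof.
move=> cardPQ P_empty x.
have cardPC : #|[predC P]| = #|T|.
  by rewrite -(cardC P) (eq_card0 (A := P)) // => y; apply/negbTE/P_empty.
have /card0_eq QC_empty : #|[predC Q]| = 0.
  by apply/eqP; rewrite -(eqn_add2l #|T|) -{1}cardPC cardPQ addn0.
by have := QC_empty x; rewrite !inE => /negbFE.
Qed.

Lemma sum_perm_split (A B : finType) (s : {perm A + B}) :
  (forall a, is_inl (s (inl a))) -> (forall b, ~~ is_inl (s (inr b))) ->
  exists (s1 : {perm A}) (s2 : {perm B}),
    (forall a, s (inl a) = inl (s1 a)) /\ (forall b, s (inr b) = inr (s2 b)).
Proof.
move=> sA sB.
pose s1 a := if s (inl a) is inl a' then a' else a.
pose s2 b := if s (inr b) is inr b' then b' else b.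
have s1E a : s (inl a) = inl (s1 a) by move: (sA a); rewrite /s1; case: (s (inl a)).
have s2E b : s (inr b) = inr (s2 b) by move: (sB b); rewrite /s2; case: (s (inr b)).
have s1_inj : injective s1.
  by move=> a a' eq_s1; apply/inl_inj/(@perm_inj _ s); rewrite !s1E eq_s1.
have s2_inj : injective s2.
  by move=> b b' eq_s2; apply/inr_inj/(@perm_inj _ s); rewrite !s2E eq_s2.
by exists (perm s1_inj), (perm s2_inj); split=> x; rewrite permE.
Qed.

Lemma exists_notin_image (T : finType) (g : T -> T) :
  #|[set g x | x : T]| < #|T| -> exists q, q \notin [set g x | x : T].
Proof.
move=> img_lt; have img_card := cardsC [set g x | x : T].
have /card_gt0P [q] : 0 < #|~: [set g x | x : T]| by lia.
by rewrite inE; exists q.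
Qed.

Lemma exists_notin2 (T : finType) (p q : T) : 2 < #|T| -> exists r, (r != p) && (r != q).
Proof.
move=> T_gt2; have card_pqC := cardsC [set p; q].
have card_pq : #|[set p; q]| <= 2 by rewrite cards2; case: (p != q).
have /card_gt0P [r] : 0 < #|~: [set p; q]| by lia.
by rewrite !inE negb_or; exists r.
Qed.

Section Functigraph.

Variables (T : finType) (e : rel T) (g : T -> T).
Local Notation F := (functigraph e g).

Lemma functigraph_copy_outer_unique (j : T -> T + T) :
  injective j -> {mono j : x y / e x y >-> F x y} ->
  outer_neighbour_unique e [pred x | is_inl (j x)].
Proof.
move=> j_inj j_mono x y1 y2 /= jx jy1 jy2 E1 E2; apply: j_inj.
rewrite -!j_mono in E1 E2; move: jx jy1 jy2 E1 E2.
case: (j x) => // a _; case: (j y1) => // b1 _; case: (j y2) => // b2 _ /=.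
by move=> /eqP <- /eqP <-.
Qed.

Lemma functigraph_aut_flip_onto (s : {perm T + T}) :
  {mono s : x y / F x y} -> (forall v, is_inl (s (inr v))) ->
  forall b, b \in [set g x | x : T].
Proof.
move=> s_mono right_to_left b.
have := permKV s (inr b); case: ((s^-1)%g (inr b)) => [a | v] sb; last first.
  by move: (right_to_left v); rewrite sb.
have := s_mono (inl a) (inr (g a)); rewrite /= eqxx sb.
move: (right_to_left (g a)); case: (s (inr (g a))) => // c _ /= /eqP <-.
exact: imset_f.
Qed.

Definition distinguishing_pair t (L1 L2 : T -> 'I_t) : Prop :=
  forall s1 s2 : {perm T}, {mono s1 : x y / e x y} -> {mono s2 : x y / e x y} ->
    (forall x, g (s1 x) = s2 (g x)) ->
    (forall x, L1 (s1 x) = L1 x) -> (forall x, L2 (s2 x) = L2 x) ->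
    s1 = 1%g /\ s2 = 1%g.

Lemma distinguishing_pair_diag t (L : T -> 'I_t) :
  distinguishing_labeling e L -> distinguishing_pair L L.
Proof.
move=> /distinguishing_labelingP L_dist s1 s2 s1_mono s2_mono _ s1_L s2_L.
by split; apply: L_dist.
Qed.

Hypothesis aut_preserves_copies : forall s : {perm T + T}, {mono s : x y / F x y} ->
  (forall u, is_inl (s (inl u))) /\ (forall v, ~~ is_inl (s (inr v))).

Lemma functigraph_dist_labeling t :
  (exists L1 L2 : T -> 'I_t, distinguishing_pair L1 L2) -> has_dist_labeling F t.
Proof.
move=> [L1 [L2 L_dist]]; apply/existsP.
exists [ffun z => match z with inl x => L1 x | inr x => L2 x end].
apply/distinguishing_labelingP => s s_mono s_lab.
have [sA sB] := aut_preserves_copies s_mono.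
have [s1 [s2 [s1E s2E]]] := sum_perm_split sA sB.
have [] := L_dist s1 s2.
- by move=> x y; have := s_mono (inl x) (inl y); rewrite !s1E.
- by move=> x y; have := s_mono (inr x) (inr y); rewrite !s2E.
- by move=> x; have := s_mono (inl x) (inr (g x)); rewrite s1E s2E /= eqxx => /eqP.
- by move=> x; have := s_lab (inl x); rewrite s1E !ffunE.
- by move=> x; have := s_lab (inr x); rewrite s2E !ffunE.
move=> s1_id s2_id; apply/permP => [[u|v]].
- by rewrite s1E s1_id !perm1.
- by rewrite s2E s2_id !perm1.
Qed.

End Functigraph.

Section FunctigraphOfJoinOfPaths.

Variables (m n : nat) (g : 'I_m + 'I_n -> 'I_m + 'I_n).
Hypotheses (m_gt1 : 1 < m) (n_gt1 : 1 < n)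
           (g_not_onto : #|[set g x | x : 'I_m + 'I_n]| < m + n).
Local Notation G := (graph_join (path_graph m) (path_graph n)).

Lemma functigraph_join_paths_aut_copies (s : {perm ('I_m + 'I_n) + ('I_m + 'I_n)}) :
  {mono s : x y / functigraph G g x y} ->
  (forall u, is_inl (s (inl u))) /\ (forall v, ~~ is_inl (s (inr v))).
Proof.
move=> s_mono.
have card_V : #|{: 'I_m + 'I_n}| = m + n by rewrite card_sum !card_ord.
have outside_le1 (P : {pred 'I_m + 'I_n}) :
    (exists x, P x) -> outer_neighbour_unique G P -> #|[predC P]| <= 1.
  apply: join_outside_le1; rewrite ?card_ord //.
    exact: path_graph_irrefl.
  exact: path_graph_neighbour.
pose P1 : {pred 'I_m + 'I_n} := [pred u | is_inl (s (inl u))].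
pose P2 : {pred 'I_m + 'I_n} := [pred v | is_inl (s (inr v))].
have uP1 : outer_neighbour_unique G P1.
  apply: (@functigraph_copy_outer_unique _ G g (s \o inl)) => [x y /perm_inj [] // | x y].
  exact: s_mono (inl x) (inl y).
have uP2 : outer_neighbour_unique G P2.
  apply: (@functigraph_copy_outer_unique _ G g (s \o inr)) => [x y /perm_inj [] // | x y].
  exact: s_mono (inr x) (inr y).
have cardC12 : #|[predC P1]| + #|[predC P2]| = #|{: 'I_m + 'I_n}|.
  by rewrite -(card_perm_to_inr s); congr (_ + _); apply: eq_card => x; rewrite !inE.
have P2_empty v : ~~ P2 v.
  apply/negP => P2v.
  have P1_empty u : ~~ P1 u.
    apply/negP => P1u.
    have := leq_add (outside_le1 _ (ex_intro _ u P1u) uP1) (outside_le1 _ (ex_intro _ v P2v) uP2).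
    by rewrite cardC12 card_V; lia.
  have [q /negP] : exists q, q \notin [set g x | x : 'I_m + 'I_n].
    by apply: exists_notin_image; rewrite card_V.
  apply; apply: (functigraph_aut_flip_onto s_mono).
  exact: predC_card_full cardC12 P1_empty.
split=> [u|]; last exact: P2_empty.
by apply: (@predC_card_full _ P2 P1 _ P2_empty); rewrite addnC.
Qed.

End FunctigraphOfJoinOfPaths.

Definition lab0 : 'I_3 := @Ordinal 3 0 isT.
Definition lab1 : 'I_3 := @Ordinal 3 1 isT.
Definition lab2 : 'I_3 := @Ordinal 3 2 isT.

(* The end of P_n is the only vertex labelled 2. The end of P_m shares label 0
   with the inner vertices of P_n but, unlike them, is not adjacent to vertex 2
   of P_m. Once both ends are fixed, so are both paths. *)
Definition end_label m n (x : 'I_m + 'I_n) : 'I_3 :=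
  match x with
  | inl i => if val i == 0 then lab0 else lab1
  | inr j => if val j == 0 then lab2 else lab0
  end.

Lemma end_label_distinguishing m n : 2 < m ->
  distinguishing_labeling (graph_join (path_graph m) (path_graph n)) (@end_label m n).
Proof.
move=> m_gt2; apply/distinguishing_labelingP => h h_mono h_lab.
have end2_fixed j : val j = 0 -> h (inr j) = inr j.
  move=> j0; have := h_lab (inr j); rewrite /= j0 /=.
  case: (h (inr j)) => [i|j'] /=; first by case: ifP => _ /(congr1 val).
  case: ifP => [/eqP j'0 _ | _ /(congr1 val) //].
  by congr inr; apply: val_inj; rewrite /= j'0 j0.
have end1_fixed i : val i = 0 -> h (inl i) = inl i.
  move=> i0; pose i2 : 'I_m := Ordinal m_gt2.
  have : graph_join (path_graph m) (path_graph n) (h (inl i)) (h (inl i2)) = false.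
    by rewrite h_mono /= /path_graph /= i0.
  have := h_lab (inl i2); have := h_lab (inl i); rewrite /= i0 /=.
  case: (h (inl i2)) => [k|j] /=; last by case: ifP => _ _ /(congr1 val).
  case: (h (inl i)) => [i'|j'] //= + _ _.
  case: ifP => [/eqP i'0 _ | _ /(congr1 val) //].
  by congr inl; apply: val_inj; rewrite /= i'0 i0.
have sideA i : is_inl (h (inl i)).
  have [/end1_fixed -> // | i_neq0] := eqVneq (val i) 0.
  have := h_lab (inl i); rewrite /= (negbTE i_neq0).
  by case: (h (inl i)) => //= j; case: ifP => _ /(congr1 val).
have sideB j : ~~ is_inl (h (inr j)).
  have [/end2_fixed -> // | j_neq0] := eqVneq (val j) 0.
  have := h_lab (inr j); rewrite /= (negbTE j_neq0).
  case hj: (h (inr j)) => [i|//] /=; case: ifP => [/eqP i0 _ | _ /(congr1 val) //].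
  by move: hj; rewrite -(end1_fixed _ i0) => /perm_inj.
have [hA [hB [hAE hBE]]] := sum_perm_split sideA sideB.
have hA1 : hA = 1%g.
  apply: path_graph_aut_fix0 => [x y | i i0]; first by have := h_mono (inl x) (inl y); rewrite !hAE.
  by have := hAE i; rewrite end1_fixed // => -[].
have hB1 : hB = 1%g.
  apply: path_graph_aut_fix0 => [x y | j j0]; first by have := h_mono (inr x) (inr y); rewrite !hBE.
  by have := hBE j; rewrite end2_fixed // => -[].
by apply/permP => -[i|j]; rewrite perm1 ?hAE ?hBE ?hA1 ?hB1 perm1.
Qed.

Lemma distinguishing_labeling_join_swap (A B : finType) (eA : rel A) (eB : rel B) t
    (L : B + A -> 'I_t) :
  distinguishing_labeling (graph_join eB eA) L ->
  distinguishing_labeling (graph_join eA eB) (L \o @sum_swap A B).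
Proof.
move=> /distinguishing_labelingP L_dist; apply/distinguishing_labelingP => s s_mono s_lab.
have conj_inj : injective (@sum_swap A B \o s \o @sum_swap B A).
  by move=> x y /(can_inj (@sum_swapK A B))/perm_inj/(can_inj (@sum_swapK B A)).
have conj_id : perm conj_inj = 1%g.
  apply: L_dist => [x y | x]; rewrite !permE /=.
    by rewrite graph_join_swap s_mono graph_join_swap.
  by have := s_lab (sum_swap x); rewrite /= sum_swapK.
apply/permP => z; apply: (can_inj (@sum_swapK A B)); rewrite perm1.
by have := congr1 (fun p : {perm _} => p (sum_swap z)) conj_id; rewrite permE perm1 /= sum_swapK.
Qed.

Section FourVertices.

Variables (T : finType) (a b c : T).
Hypotheses (card_T : #|T| = 4) (ab : a != b) (ca : c != a) (cb : c != b).

Definition class_label (x : T) : 'I_3 :=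
  if (x == a) || (x == b) then lab0 else if x == c then lab1 else lab2.

Lemma class_label0 x : (class_label x == lab0) = (x == a) || (x == b).
Proof. by rewrite /class_label; case: ifP => // _; case: ifP. Qed.

Lemma class_label1 x : (class_label x == lab1) = (x == c).
Proof.
rewrite /class_label; case: ifP => [/orP [] /eqP -> | _]; last by case: ifP.
  by rewrite [_ == c]eq_sym (negbTE ca).
by rewrite [_ == c]eq_sym (negbTE cb).
Qed.

Lemma card_outside3_le1 : #|~: (a |: [set b; c])| <= 1.
Proof.
have := cardsC (a |: [set b; c]); rewrite card_T cardsU1 cards2 !inE.
by rewrite (negbTE ab) ![_ == c]eq_sym (negbTE ca) (negbTE cb); lia.
Qed.

Lemma class_label_fix (s : {perm T}) :
  (forall x, class_label (s x) = class_label x) -> s a = a -> s = 1%g.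
Proof.
move=> s_lab sa; apply/permP => x; rewrite perm1.
have [-> // | xa] := eqVneq x a.
have [-> | xb] := eqVneq x b.
  have : class_label (s b) == lab0 by rewrite s_lab class_label0 eqxx orbT.
  rewrite class_label0 => /orP [/eqP sba | /eqP //].
  have ba : b = a by apply: (@perm_inj _ s); rewrite sba sa.
  by move: ab; rewrite ba eqxx.
have [-> | xc] := eqVneq x c.
  by apply/eqP; rewrite -class_label1 s_lab class_label1.
have outside y :
    y \in ~: (a |: [set b; c]) = ~~ ((class_label y == lab0) || (class_label y == lab1)).
  by rewrite class_label0 class_label1 !inE orbA.
apply: (card_le1_eqP card_outside3_le1); rewrite outside ?s_lab -outside !inE.
  by rewrite (negbTE xa) (negbTE xb) (negbTE xc).
by rewrite (negbTE xa) (negbTE xb) (negbTE xc).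
Qed.

End FourVertices.

Lemma card4_distinguishing_pair (T : finType) (e : rel T) (g : T -> T) :
  #|T| = 4 -> 1 < #|[set g x | x : T]| -> #|[set g x | x : T]| < 4 ->
  exists L1 L2 : T -> 'I_3, distinguishing_pair e g L1 L2.
Proof.
move=> card_T /card_gt1P [_ [_ [/imsetP [u _ ->] /imsetP [v _ ->] guv]]] img_lt4.
have [q q_out] : exists q, q \notin [set g x | x : T].
  by apply: exists_notin_image; rewrite card_T.
have uv : u != v by apply: contraNneq guv => ->.
have guq : g u != q by apply: contraNneq q_out => <-; apply: imset_f.
have [r /andP [rgu rq]] : exists r, (r != g u) && (r != q).
  by apply: exists_notin2; rewrite card_T.
have [r' /andP [r'u r'v]] : exists r', (r' != u) && (r' != v).
  by apply: exists_notin2; rewrite card_T.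
exists (class_label u v r'), (class_label (g u) q r) => s1 s2 _ _ g_s12 s1_lab s2_lab.
have s2_id : s2 = 1%g.
  apply: (class_label_fix card_T guq rgu rq s2_lab).
  have : class_label (g u) q r (s2 (g u)) == lab0 by rewrite s2_lab class_label0 eqxx.
  rewrite class_label0 => /orP [/eqP // | /eqP s2gu].
  by move: q_out; rewrite -s2gu -g_s12 imset_f.
split=> //; apply: (class_label_fix card_T uv r'u r'v s1_lab).
have : class_label u v r' (s1 u) == lab0 by rewrite s1_lab class_label0 eqxx.
rewrite class_label0 => /orP [/eqP // | /eqP s1u].
by move: guv; rewrite -s1u g_s12 s2_id perm1 eqxx.
Qed.

Lemma functigraph_join_paths_dist3 m n (g : 'I_m + 'I_n -> 'I_m + 'I_n) :
  1 < m -> 1 < n -> 1 < #|[set g x | x : 'I_m + 'I_n]| ->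
  #|[set g x | x : 'I_m + 'I_n]| < m + n ->
  has_dist_labeling (functigraph (graph_join (path_graph m) (path_graph n)) g) 3.
Proof.
move=> m_gt1 n_gt1 g_nonconst g_not_onto.
apply: functigraph_dist_labeling; first exact: functigraph_join_paths_aut_copies.
have [m_gt2 | m_le2] := ltnP 2 m.
  exists (@end_label m n), (@end_label m n).
  exact/distinguishing_pair_diag/end_label_distinguishing.
have [n_gt2 | n_le2] := ltnP 2 n.
  exists (@end_label n m \o sum_swap), (@end_label n m \o sum_swap).
  exact/distinguishing_pair_diag/distinguishing_labeling_join_swap/end_label_distinguishing.
have mn4 : m + n = 4 by lia.
apply: card4_distinguishing_pair => //; first by rewrite card_sum !card_ord.
by rewrite -mn4.
Qed.

Theorem proposition3p6 (m n : nat) (hm : 2 <= m) (hn : 2 <= n)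
  (g : 'I_m + 'I_n -> 'I_m + 'I_n)
  (hs1 : 1 < #|[set g x | x : 'I_m + 'I_n]|)
  (hs2 : #|[set g x | x : 'I_m + 'I_n]| < m + n) :
  1 <= Dist (functigraph (graph_join (path_graph m) (path_graph n)) g) <= 3.
Proof.
have m_gt0 : 0 < m by exact: ltnW.
apply/andP; split; first exact: (Dist_gt0 _ (inl (inl (Ordinal m_gt0)))).
exact/Dist_le/functigraph_join_paths_dist3.
Qed.
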